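(* Let $G$ be a $2$-connected (finite, simple) graph with pathwidth $p$. Then every edge of $G$ is contained in a bond $F$ of $G$ such that $p \le 3|F|-2$. In particular, if $G$ has cocircumference $k$, then $\mathrm{pw}(G)\le 3k-2$.
   Context: A bond of a graph $G$ is an inclusion-wise minimal set of edges $F$ such that $G-F$ has more connected components than $G$. The cocircumference of a graph with at least one edge is the maximum size of a bond. A tree-decomposition of $G$ is a family $\{X_u : u\in V(T)\}$ of subsets of $V(G)$ indexed by the nodes of a tree $T$ such that for every $x\in V(G)$ the nodes $u$ with $x\in X_u$ induce a non-empty subtree of $T$, and every edge $xy$ of $G$ satisfies $\{x,y\}\subseteq X_u$ for some $u$; its width is $\max_u |X_u|-1$. A path-decomposition is a tree-decomposition where $T$ is a path, written as a sequence of bags $(X_0,\dots,X_s)$; the pathwidth $\mathrm{pw}(G)$ is the minimum width of a path-decomposition of $G$. *)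

(* A finite simple graph is a symmetric irreflexive relation
   [g : rel T] on a finite type [T]; edges are 2-element vertex sets. *)
From mathcomp Require Import all_boot.
Set Implicit Arguments. Unset Strict Implicit. Unset Printing Implicit Defensive.

Section Graphs.
Variable T : finType.

Definition simple_graph (g : rel T) : Prop := symmetric g /\ irreflexive g.

Definition edges (g : rel T) : {set {set T}} :=
  [set [set u.1; u.2] | u : T * T & g u.1 u.2].

Definition ncomp (g : rel T) : nat :=
  #|[set [set y | connect g x y] | x : T]|.

Definition del_edges (g : rel T) (F : {set {set T}}) : rel T :=
  [rel x y | g x y && ([set x; y] \notin F)].

(* G - v : delete vertex v (v becomes isolated; we only consider other vertices) *)
Definition del_vertex (g : rel T) (v : T) : rel T :=
  [rel x y | [&& g x y, x != v & y != v]].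

Definition disconnects (g : rel T) (F : {set {set T}}) : Prop :=
  ncomp g < ncomp (del_edges g F).

Definition bond (g : rel T) (F : {set {set T}}) : Prop :=
  F \subset edges g /\ disconnects g F /\
  (forall F' : {set {set T}}, F' \proper F -> ~ disconnects g F').

Definition connected (g : rel T) : Prop := forall x y : T, connect g x y.

Definition two_connected (g : rel T) : Prop :=
  2 < #|T| /\ connected g /\
  (forall v x y : T, x != v -> y != v -> connect (del_vertex g v) x y).

Definition is_cocircumference (g : rel T) (k : nat) : Prop :=
  (exists F, bond g F /\ #|F| = k) /\ (forall F, bond g F -> #|F| <= k).

Definition path_decomposition (g : rel T) (s : seq {set T}) : Prop :=
  s != [::] /\
  (forall x : T, exists2 i, i < size s & x \in nth set0 s i) /\
  (forall (x : T) (i j k : nat), i <= j -> j <= k -> k < size s ->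
     x \in nth set0 s i -> x \in nth set0 s k -> x \in nth set0 s j) /\
  (forall x y : T, g x y ->
     exists2 i, i < size s & (x \in nth set0 s i) && (y \in nth set0 s i)).

Definition pd_width (s : seq {set T}) : nat := (\max_(X <- s) #|X|).-1.

Definition is_pathwidth (g : rel T) (p : nat) : Prop :=
  (exists2 s, path_decomposition g s & pd_width s = p) /\
  (forall s, path_decomposition g s -> p <= pd_width s).

End Graphs.

From mathcomp Require Import all_boot zify.
Set Implicit Arguments. Unset Strict Implicit. Unset Printing Implicit Defensive.

(* Fix an edge xy of the 2-connected graph.  Enumerate the vertices as
   x = v_0, ..., v_(n-1) = y so that for 0 < i < n both the prefix
   S_i = {v_0, ..., v_(i-1)} and its complement induce connected subgraphs.
   A prefix S is extended by a vertex v outside S, adjacent to S and distinct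
   from y, maximising the component of y in G[V - S - v]: a vertex of
   V - S - v outside that component would, by 2-connectivity, lead to another
   such vertex u whose component strictly contains it, so the component is all
   of V - S - v.  Then every edge cut delta(S_i) is a bond containing xy, and
   the bags {v_i} + {u before v_i with a neighbour at or after v_i} form a
   path-decomposition whose i-th bag has at most |delta(S_i)| + 1 vertices.
   Hence p <= |F| <= 3|F| - 2 for a largest such bond F. *)

Section Induced.
Variable T : finType.
Implicit Types (h : rel T) (A B : {set T}).

Definition induced h B : rel T := [rel u w | [&& h u w, u \in B & w \in B]].

Definition connected_in h B :=
  forall a b, a \in B -> b \in B -> connect (induced h B) a b.

Lemma connect_mono h h' : subrel h h' -> subrel (connect h) (connect h').
Proof. by move=> hh'; apply: connect_sub => u w /hh'/connect1. Qed.

Lemma connect_exit h A a b : connect h a b -> a \in A -> b \notin A ->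
  exists u w, [/\ u \in A, w \notin A & h u w].
Proof.
move=> /connectP[p]; elim: p a => [|c p IHp] a /=.
  by move=> _ -> aA; rewrite aA.
case/andP=> hac pc lastb aA bA; case cA: (c \in A); first exact: IHp lastb cA bA.
by exists a, c; rewrite cA.
Qed.

Lemma induced_sym h B : symmetric h -> symmetric (induced h B).
Proof. by move=> sh u w; rewrite /induced /= sh (andbC (u \in B)). Qed.

Lemma induced_subset h B B' : B \subset B' -> subrel (induced h B) (induced h B').
Proof. by move=> /subsetP sBB' u w /and3P[huw /sBB' uB' /sBB' wB']; apply/and3P. Qed.

Lemma connect_induced_mem h B a b : a \in B -> connect (induced h B) a b -> b \in B.
Proof.
move=> aB /connectP[p]; elim: p a aB => [|c p IHp] a aB /=; first by move=> _ ->.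
by case/andP=> /and3P[_ _ cB]; apply: IHp.
Qed.

Lemma connect_induced h B a b : (forall z, connect h a z -> z \in B) ->
  connect h a b -> connect (induced h B) a b.
Proof.
move=> reachB /connectP[p]; elim: p a reachB => [|c p IHp] a reachB /=.
  by move=> _ ->.
case/andP=> hac pc lastb; apply: connect_trans (IHp c _ pc lastb).
  by apply: connect1; apply/and3P; split; [| apply: reachB | apply/reachB/connect1].
by move=> z cz; apply: reachB; apply: connect_trans (connect1 hac) cz.
Qed.

Lemma connected_in_from_root h B r : symmetric h ->
  (forall c, c \in B -> connect (induced h B) r c) -> connected_in h B.
Proof.
move=> sh rB a b aB bB; apply: connect_trans (rB b bB).
by rewrite (sym_connect_sym (induced_sym _ sh)) rB.
Qed.

Lemma connected_in_setU1 h B v u : symmetric h ->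
  connected_in h B -> u \in B -> h v u -> connected_in h (v |: B).
Proof.
move=> sh cB uB hvu; apply: (connected_in_from_root (r := u)) => // c.
have lift a b : connect (induced h B) a b -> connect (induced h (v |: B)) a b.
  by apply/connect_mono/induced_subset/subsetUr.
rewrite in_setU1 => /predU1P[->|cB']; last exact/lift/cB.
apply/connect1/and3P; split; rewrite ?in_setU1 ?eqxx ?uB ?orbT //.
by rewrite sh.
Qed.

Lemma connected_has_edge h : connected h -> 1 < #|T| -> exists x y, h x y.
Proof.
move=> ch /card_gt1P[a [b [_ _ ab]]].
have bA : b \notin [set a] by rewrite inE eq_sym.
by have [u [w [_ _ huw]]] := connect_exit (ch a b) (set11 a) bA; exists u, w.
Qed.

Lemma ncomp_connected h : connected h -> T -> ncomp h = 1.
Proof.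
move=> ch a; apply/eqP/cards1P; exists setT; apply/setP=> X.
rewrite inE; apply/imsetP/eqP=> [[w _ ->]|->]; last exists a => //.
  by apply/setP=> z; rewrite !inE ch.
by apply/setP=> z; rewrite !inE ch.
Qed.

End Induced.

Definition bond_side (T : finType) (g : rel T) (x y : T) (S : {set T}) :=
  [/\ x \in S, y \notin S, connected_in g S & connected_in g (~: S)].

Section EdgeCut.
Variables (T : finType) (g : rel T).
Hypothesis sym_g : symmetric g.
Implicit Types (S : {set T}) (F : {set {set T}}).

Definition edge_cut S : {set {set T}} :=
  [set [set u.1; u.2] | u : T * T & [&& g u.1 u.2, u.1 \in S & u.2 \notin S]].

Definition boundary S := [set u in S | [exists w, (w \notin S) && g u w]].

Lemma mem_edge_cut S a b : g a b -> a \in S -> b \notin S -> [set a; b] \in edge_cut S.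
Proof. by move=> gab aS bS; apply/imsetP; exists (a, b); rewrite // inE /= gab aS. Qed.

Lemma edge_cutP S e : e \in edge_cut S ->
  exists a b, [/\ e = [set a; b], g a b, a \in S & b \notin S].
Proof. by case/imsetP=> [[a b]]; rewrite inE /= => /and3P[gab aS bS] ->; exists a, b. Qed.

Lemma edge_cut0 : edge_cut set0 = set0.
Proof.
by apply/setP=> e; rewrite inE; apply/negP=> /edge_cutP[a [b [_ _]]]; rewrite inE.
Qed.

Lemma edge_cut_sub_edges S : edge_cut S \subset edges g.
Proof.
apply/subsetP=> e /edge_cutP[a [b [-> gab _ _]]].
by apply/imsetP; exists (a, b); rewrite // inE.
Qed.

Lemma edge_cut_crossing S a b : g a b -> (a \in S) != (b \in S) ->
  [set a; b] \in edge_cut S.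
Proof.
case aS: (a \in S); case bS: (b \in S) => // gab _; first by rewrite mem_edge_cut ?bS.
by rewrite setUC mem_edge_cut // ?aS // sym_g.
Qed.

Lemma edge_cut_same S a b : (a \in S) = (b \in S) -> [set a; b] \notin edge_cut S.
Proof.
move=> eab; apply/negP=> /edge_cutP[c [d [cd _ cS dS]]].
have sameS z : z \in [set a; b] -> (z \in S) = (a \in S).
  by rewrite !inE => /orP[]/eqP->.
have [cab dab] : c \in [set a; b] /\ d \in [set a; b] by rewrite cd !inE !eqxx orbT.
by move: dS; rewrite (sameS d dab) -(sameS c cab) cS.
Qed.

Lemma card_boundary S : #|boundary S| <= #|edge_cut S|.
Proof.
pose out u := odflt u [pick w | (w \notin S) && g u w].
have outP u : u \in boundary S -> out u \notin S /\ g u (out u).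
  rewrite inE /out => /andP[_ /existsP[w wP]].
  by case: pickP => [w' /andP[] | /(_ w)]; [|rewrite wP].
rewrite -(@card_in_imset _ _ (fun u => [set u; out u])); last first.
  move=> u1 u2 u1B u2B e12; have [out2S _] := outP u2 u2B.
  have : u1 \in [set u2; out u2] by rewrite -e12 !inE eqxx.
  rewrite !inE => /orP[/eqP //|/eqP u1out]; move: u1B out2S.
  by rewrite inE u1out => /andP[->].
apply/subset_leq_card/subsetP=> _ /imsetP[u uB ->].
have [outS guo] := outP u uB; apply: mem_edge_cut => //.
by move: uB; rewrite inE => /andP[].
Qed.

Lemma del_edges_sym F : symmetric (del_edges g F).
Proof. by move=> a b; rewrite /del_edges /= sym_g setUC. Qed.

Lemma induced_del_edges S (B : {set T}) F : F \subset edge_cut S ->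
  {in B &, forall u w, (u \in S) = (w \in S)} -> subrel (induced g B) (del_edges g F).
Proof.
move=> /subsetP FS sideB u w /and3P[guw uB wB]; rewrite /del_edges /= guw /=.
by apply: contra (edge_cut_same (sideB u w uB wB)); apply: FS.
Qed.

Hypothesis conn_g : connected g.

Lemma edge_cut_disconnects S x y : x \in S -> y \notin S -> disconnects g (edge_cut S).
Proof.
move=> xS yS; rewrite /disconnects (ncomp_connected conn_g x) /ncomp.
set h := del_edges g (edge_cut S).
have closedS : closed h S.
  by move=> u w /andP[guw]; apply: contraNeq => /(edge_cut_crossing guw).
apply/card_gt1P; exists [set z | connect h x z], [set z | connect h y z].
split; [by apply/imsetP; exists x | by apply/imsetP; exists y |].
apply/negP=> /eqP/setP/(_ y); rewrite !inE connect0 => hxy.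
by have := closed_connect closedS hxy; rewrite xS (negbTE yS).
Qed.

Lemma edge_cut_minimal S F : connected_in g S -> connected_in g (~: S) ->
  F \proper edge_cut S -> ~ disconnects g F.
Proof.
move=> cS cSC /properP[FS [e eS eF]].
have [a [b [eab gab aS bS]]] := edge_cutP eS.
suff conn : connected (del_edges g F).
  by rewrite /disconnects (ncomp_connected conn_g a) (ncomp_connected conn a).
have lift (B : {set T}) : {in B &, forall u w, (u \in S) = (w \in S)} ->
    subrel (connect (induced g B)) (connect (del_edges g F)).
  by move=> sideB; apply: connect_mono; exact: induced_del_edges FS sideB.
have to_a z : connect (del_edges g F) z a.
  case zS: (z \in S).
    by apply: (lift S _ _ _ (cS z a zS aS)) => u w -> ->.
  have side : {in ~: S &, forall u w, (u \in S) = (w \in S)}.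
    by move=> u w; rewrite !inE => /negbTE-> /negbTE->.
  apply: connect_trans (lift _ side _ _ (cSC z b _ _)) _; rewrite ?inE ?zS //.
  by apply: connect1; rewrite /del_edges /= sym_g gab /= setUC -eab.
move=> u w; apply: connect_trans (to_a u) _.
by rewrite (sym_connect_sym (del_edges_sym F)).
Qed.

Lemma edge_cut_bond x y S : bond_side g x y S -> bond g (edge_cut S).
Proof.
case=> xS yS cS cSC; split; first exact: edge_cut_sub_edges.
by split; [apply: edge_cut_disconnects xS yS | move=> F; apply: edge_cut_minimal].
Qed.

End EdgeCut.

Section Extension.
Variables (T : finType) (g : rel T) (x y : T).
Hypothesis sym_g : symmetric g.
Hypothesis no_cut_vertex :
  forall v a b, a != v -> b != v -> connect (del_vertex g v) a b.

Variable S : {set T}.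
Hypothesis S_side : bond_side g x y S.

Definition attachment v := [&& v \notin S, v != y & [exists u in S, g u v]].

Definition reach v := [set z | connect (induced g (~: S :\ v)) y z].

Lemma attachment_exists : #|S|.+1 < #|T| -> exists v, attachment v.
Proof.
case: S_side => xS yS _ _ card_S.
have [z] : exists z, z \in ~: S :\ y.
  apply/set0Pn; rewrite -card_gt0.
  by move: card_S; rewrite -(cardsC S) (cardsD1 y (~: S)) inE yS; lia.
rewrite !inE => /andP[zy zS].
have xy : x != y by apply: contraNneq yS => <-.
have [u [w [uS wS /and3P[guw _ wy]]]] := connect_exit (no_cut_vertex xy zy) xS zS.
by exists w; rewrite /attachment wS wy /=; apply/existsP; exists u; rewrite uS.
Qed.

Lemma root_in_reach v : y \in reach v.
Proof. by rewrite inE. Qed.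

Lemma reach_subset v : v != y -> reach v \subset ~: S :\ v.
Proof.
move=> vy; apply/subsetP=> z; rewrite inE; apply: connect_induced_mem.
by case: S_side => _ yS _ _; rewrite !inE eq_sym vy.
Qed.

Lemma unreached_attachment v c : v \notin S -> c \in ~: S :\ v -> c \notin reach v ->
  exists2 u, attachment u & u \in ~: S :\ v /\ u \notin reach v.
Proof.
move=> vS cV cR; have [xS _ _ _] := S_side.
pose C := [set z | connect (induced g (~: S :\ v)) c z].
have CV z : z \in C -> z \in ~: S :\ v by rewrite inE; apply: connect_induced_mem.
have cv : c != v by move: cV; rewrite !inE => /andP[].
have xv : x != v by apply: contraNneq vS => <-.
have xC : x \notin C by apply/negP=> /CV; rewrite !inE xS andbF.
have cC : c \in C by rewrite inE.
have [u [w [uC wC /and3P[guw _ wv]]]] := connect_exit (no_cut_vertex cv xv) cC xC.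
have cu : connect (induced g (~: S :\ v)) c u by rewrite inE in uC.
have uR : u \notin reach v.
  apply: contra cR; rewrite !inE => yu; apply: connect_trans yu _.
  by rewrite (sym_connect_sym (induced_sym _ sym_g)).
have wS : w \in S.
  apply: contraNT wC => wS; rewrite inE; apply: connect_trans cu _.
  by apply: connect1; apply/and3P; split; [| exact: CV | rewrite !inE wv].
exists u; last by split; rewrite ?CV.
have := CV u uC; rewrite /attachment !inE => /andP[_ ->] /=.
apply/andP; split; first by apply: contraNneq uR => ->; apply: root_in_reach.
by apply/existsP; exists w; rewrite wS sym_g.
Qed.

Lemma reach_subset_reach v u : u \notin reach v -> reach v \subset reach u.
Proof.
move=> uR; apply/subsetP=> z; rewrite !inE => yz.
suff : connect (induced (induced g (~: S :\ v)) [set~ u]) y z.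
  apply: connect_mono => a b /and3P[/and3P[gab aV bV] au bu]; apply/and3P.
  by move: aV bV au bu; rewrite !inE => /andP[_ ->] /andP[_ ->] -> ->.
apply: connect_induced yz => z' yz'; rewrite !inE.
by apply: contraNneq uR => <-; rewrite inE.
Qed.

Lemma reach_proper v u : attachment v -> u \in ~: S :\ v -> u \notin reach v ->
  reach v \proper reach u.
Proof.
case/and3P=> vS vy _ uV uR; have [_ yS _ cSC] := S_side.
have reachV := subsetP (reach_subset vy).
have sub := reach_subset_reach uR.
have vR : v \notin reach v by apply/negP=> /reachV; rewrite !inE eqxx.
apply/properP; split => //; exists v => //.
have ySC : y \in ~: S by rewrite inE.
have vSC : v \in ~: S by rewrite inE.
have [a [b [aR bR /and3P[gab _ bSC]]]] :=
  connect_exit (cSC y v ySC vSC) (root_in_reach v) vR.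
have aV := reachV a aR.
have bv : b = v.
  apply: contraNeq bR => bv; rewrite inE; apply: connect_trans (_ : connect _ y a) _.
    by rewrite inE in aR.
  by apply/connect1/and3P; split; rewrite // !inE bv; rewrite inE in bSC.
subst b; have au : a != u by apply: contraNneq uR => <-.
move/(subsetP sub): aR; rewrite !inE => ya; apply: connect_trans ya _.
apply: connect1; apply/and3P; split => //; rewrite !inE ?au ?vS.
  by move: aV; rewrite !inE => /andP[_ ->].
by move: uV; rewrite !inE eq_sym => /andP[->].
Qed.

Lemma bond_side_extend : #|S|.+1 < #|T| ->
  exists v, [/\ v \notin S, v != y & bond_side g x y (v |: S)].
Proof.
move=> card_S; have [v0 att_v0] := attachment_exists card_S.
case: (arg_maxnP (fun v => #|reach v|) att_v0) => v att_v reach_max.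
have /and3P[vS vy /existsP[u /andP[uS guv]]] := att_v.
have [xS yS cS _] := S_side.
have reach_all c : c \in ~: S :\ v -> c \in reach v.
  move=> cV; apply: contraT => cR.
  have [w att_w [wV wR]] := unreached_attachment vS cV cR.
  have := proper_card (reach_proper att_v wV wR).
  by rewrite ltnNge (reach_max w att_w : #|reach w| <= #|reach v|).
exists v; split => //; split.
- by rewrite !inE xS orbT.
- by rewrite !inE negb_or eq_sym vy.
- by apply: connected_in_setU1 sym_g cS uS _; rewrite sym_g.
- rewrite setCU setIC -setDE.
  by apply: (connected_in_from_root (r := y) sym_g) => c /reach_all; rewrite inE.
Qed.

End Extension.

Section Prefix.
Variable T : finType.
Implicit Type s : seq T.

Definition prefix_set s i := [set u | index u s < i].

Lemma prefix_set0 s : prefix_set s 0 = set0.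
Proof. by apply/setP=> u; rewrite !inE. Qed.

Lemma prefix_set_rcons s v i : i <= size s -> prefix_set (rcons s v) i = prefix_set s i.
Proof.
move=> le_i; apply/setP=> u; rewrite !inE -cats1 index_cat; case: ifP => // /negbT us.
by rewrite (memNindex us) !ltnNge le_i (leq_trans le_i (leq_addr _ _)).
Qed.

Lemma prefix_set_size s : prefix_set s (size s) = [set u in s].
Proof. by apply/setP=> u; rewrite !inE index_mem. Qed.

Lemma prefix_set_rcons_size s v :
  prefix_set (rcons s v) (size s).+1 = v |: [set u in s].
Proof.
apply/setP=> u; rewrite !inE -cats1 index_cat; case: ifP => us.
  by rewrite orbT ltnS index_size.
rewrite orbF /= eq_sym.
by case: eqP => _; rewrite ?addn0 ?addn1 ?ltnn ?ltnSn.
Qed.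

End Prefix.

Section Ordering.
Variables (T : finType) (g : rel T) (x y : T).
Hypothesis sym_g : symmetric g.
Hypothesis no_cut_vertex :
  forall v a b, a != v -> b != v -> connect (del_vertex g v) a b.
Hypothesis xy : x != y.

Lemma bond_side_set1 : bond_side g x y [set x].
Proof.
split; rewrite ?inE ?eqxx 1?eq_sym //.
  by move=> a b; rewrite !inE => /eqP-> /eqP->.
move=> a b; rewrite !inE => ax bx; apply: connect_mono (no_cut_vertex ax bx).
by move=> u w /and3P[guw ux wx]; apply/and3P; rewrite !inE.
Qed.

Lemma bond_side_sequence m : 0 < m < #|T| -> exists s : seq T,
  [/\ size s = m, uniq s, y \notin s &
      forall i, 0 < i <= m -> bond_side g x y (prefix_set s i)].
Proof.
elim: m => // [[|m]] IH /andP[_ mT].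
  exists [:: x]; split => //; first by rewrite inE eq_sym.
  case=> [|[|//]] // _; rewrite (prefix_set_size [:: x]) (_ : [set u in _] = [set x]).
    exact: bond_side_set1.
  by apply/setP=> u; rewrite !inE.
have [s [size_s uniq_s ys sides]] := IH (ltnW mT).
have side_s : bond_side g x y [set u in s].
  by rewrite -prefix_set_size; apply: sides; rewrite size_s leqnn.
have card_s : #|[set u in s]|.+1 < #|T| by rewrite cardsE (card_uniqP uniq_s) size_s.
have [v [vs vy side_v]] := bond_side_extend sym_g no_cut_vertex side_s card_s.
exists (rcons s v); split.
- by rewrite size_rcons size_s.
- by rewrite rcons_uniq -[v \in s]in_set vs.
- by rewrite mem_rcons inE negb_or eq_sym vy.
move=> i /andP[i0]; rewrite leq_eqVlt ltnS => /orP[/eqP->|le_i].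
  by rewrite -size_s prefix_set_rcons_size.
by rewrite prefix_set_rcons ?size_s //; apply: sides; rewrite i0.
Qed.

Lemma bond_side_ordering : exists ord : seq T,
  [/\ uniq ord, size ord = #|T|, forall u, u \in ord &
      forall i, 0 < i < #|T| -> bond_side g x y (prefix_set ord i)].
Proof.
have T2 : 1 < #|T| by apply/card_gt1P; exists x, y.
have m_range : 0 < #|T|.-1 < #|T| by lia.
have [s [size_s uniq_s ys sides]] := bond_side_sequence m_range.
have uniq_ord : uniq (rcons s y) by rewrite rcons_uniq ys.
have size_ord : size (rcons s y) = #|T| by rewrite size_rcons size_s; lia.
exists (rcons s y); split => //.
  move=> u; have /card_uniqP := uniq_ord; rewrite size_ord => /subset_cardP.
  by move/(_ (subset_predT _)) ->.
move=> i /andP[i0 iT]; rewrite prefix_set_rcons ?size_s; last by lia.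
by apply: sides; rewrite i0; lia.
Qed.

End Ordering.

Section OrderingDecomposition.
Variables (T : finType) (g : rel T) (ord : seq T).
Hypothesis sym_g : symmetric g.
Hypothesis ord_uniq : uniq ord.
Hypothesis ord_total : forall u, u \in ord.

Local Notation pos u := (index u ord).

Definition bag i :=
  [set u | (pos u <= i) && [exists w, (i <= pos w) && ((w == u) || g u w)]].

Definition ordering_bags := [seq bag i | i <- iota 0 (size ord)].

Lemma size_ordering_bags : size ordering_bags = size ord.
Proof. by rewrite size_map size_iota. Qed.

Lemma nth_ordering_bags i : i < size ord -> nth set0 ordering_bags i = bag i.
Proof. by move=> lt_i; rewrite (nth_map 0) ?size_iota // nth_iota. Qed.

Lemma pos_lt_size u : pos u < size ord.
Proof. by rewrite index_mem. Qed.

Lemma mem_bag_pos u : u \in bag (pos u).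
Proof. by rewrite inE leqnn; apply/existsP; exists u; rewrite leqnn eqxx. Qed.

Lemma mem_bag_edge a b : g a b -> pos a <= pos b -> a \in bag (pos b).
Proof.
by move=> gab le_ab; rewrite inE le_ab; apply/existsP; exists b; rewrite leqnn gab orbT.
Qed.

Lemma ordering_bags_pd : T -> path_decomposition g ordering_bags.
Proof.
move=> u0; split; [|split; [|split]].
- by rewrite -size_eq0 size_ordering_bags -lt0n; apply: leq_ltn_trans (pos_lt_size u0).
- move=> u; exists (pos u); first by rewrite size_ordering_bags pos_lt_size.
  by rewrite nth_ordering_bags ?pos_lt_size ?mem_bag_pos.
- move=> u i j k le_ij le_jk; rewrite size_ordering_bags => lt_k.
  have lt_j := leq_ltn_trans le_jk lt_k; have lt_i := leq_ltn_trans le_ij lt_j.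
  rewrite !nth_ordering_bags // !inE => /andP[le_ui _].
  case/andP=> _ /existsP[w /andP[le_kw uw]].
  rewrite (leq_trans le_ui le_ij); apply/existsP; exists w.
  by rewrite (leq_trans le_jk le_kw).
move=> a b gab; case: (leqP (pos a) (pos b)) => [le_ab | /ltnW le_ba].
  exists (pos b); first by rewrite size_ordering_bags pos_lt_size.
  by rewrite nth_ordering_bags ?pos_lt_size // mem_bag_pos mem_bag_edge.
exists (pos a); first by rewrite size_ordering_bags pos_lt_size.
by rewrite nth_ordering_bags ?pos_lt_size // mem_bag_pos mem_bag_edge // sym_g.
Qed.

Lemma card_bag i : i < size ord ->
  #|bag i| <= #|edge_cut g (prefix_set ord i)|.+1.
Proof.
move=> lt_i; have u0 : T by case: ord lt_i.
set v := nth u0 ord i.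
have pos_v : pos v = i by rewrite index_uniq.
suff : bag i :\ v \subset boundary g (prefix_set ord i).
  move/subset_leq_card/leq_trans/(_ (card_boundary _ _)).
  move=> le_cut; rewrite (cardsD1 v).
  by case: (v \in bag i); rewrite ?add1n ?add0n ?ltnS // ltnW.
apply/subsetP=> u; rewrite !inE => /andP[uv /andP[le_ui /existsP[w /andP[le_iw]]]].
have lt_ui : pos u < i.
  rewrite ltn_neqAle le_ui andbT; apply: contra uv => /eqP pos_u.
  by apply/eqP; apply: (@index_inj _ u ord u v); rewrite ?ord_total ?pos_u ?pos_v.
case/orP=> [/eqP wu | guw]; first by move: le_iw; rewrite wu leqNgt lt_ui.
by rewrite lt_ui; apply/existsP; exists w; rewrite inE -leqNgt le_iw.
Qed.

Lemma pd_width_ordering_bags K :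
  (forall i, 0 < i < size ord -> #|edge_cut g (prefix_set ord i)| <= K) ->
  pd_width ordering_bags <= K.
Proof.
move=> cut_le; rewrite /pd_width; suff : \max_(X <- ordering_bags) #|X| <= K.+1 by lia.
apply/bigmax_leqP_seq=> X /mapP[i]; rewrite mem_iota add0n => /andP[_ lt_i] -> _.
apply: leq_trans (card_bag lt_i) _; rewrite ltnS.
case: (posnP i) => [-> | i_pos]; first by rewrite prefix_set0 edge_cut0 cards0.
by rewrite cut_le ?i_pos.
Qed.

End OrderingDecomposition.

Lemma pathwidth_le_bond_through_edge (T : finType) (g : rel T) (p : nat) (x y : T) :
  simple_graph g -> two_connected g -> is_pathwidth g p -> g x y ->
  exists F : {set {set T}}, [/\ bond g F, [set x; y] \in F & p <= #|F|].
Proof.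
move=> [sym_g irr_g] [_ [conn_g no_cut]] [_ pw_min] gxy.
have xy : x != y by apply: contraTneq gxy => ->; rewrite irr_g.
have [ord [ord_uniq ord_size ord_total sides]] := bond_side_ordering sym_g no_cut xy.
have T2 : 1 < #|T| by apply/card_gt1P; exists x, y.
pose cut (i : 'I_#|T|) := #|edge_cut g (prefix_set ord i)|.
have [i i_pos cut_max] := @arg_maxnP _ (Ordinal T2) (fun i => 0 < i) cut isT.
have side_i : bond_side g x y (prefix_set ord i) by apply: sides; rewrite i_pos ltn_ord.
exists (edge_cut g (prefix_set ord i)); split.
- exact: (edge_cut_bond sym_g conn_g side_i).
- by case: side_i => xS yS _ _; exact: (mem_edge_cut gxy xS yS).
apply: leq_trans (pw_min _ (ordering_bags_pd sym_g ord_total x)) _.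
apply: (pd_width_ordering_bags ord_uniq ord_total) => j.
rewrite ord_size => /andP[j_pos j_lt].
exact: (cut_max (Ordinal j_lt)).
Qed.

Theorem theorem1p4 (T : finType) (g : rel T) (p : nat) :
  simple_graph g -> two_connected g -> is_pathwidth g p ->
  (forall x y : T, g x y ->
     exists F : {set {set T}}, [/\ bond g F, [set x; y] \in F & p <= 3 * #|F| - 2])
  /\ (forall k : nat, is_cocircumference g k -> p <= 3 * k - 2).
Proof.
move=> simple_g two_conn_g pw_g.
have bond_bound x y : g x y ->
    exists F : {set {set T}}, [/\ bond g F, [set x; y] \in F & p <= 3 * #|F| - 2].
  move=> gxy; have [F [bond_F xyF pF]] :=
    pathwidth_le_bond_through_edge simple_g two_conn_g pw_g gxy.
  have : 0 < #|F| by apply/card_gt0P; exists [set x; y].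
  by exists F; split => //; lia.
split=> // k [_ max_k]; have [T3 [conn_g _]] := two_conn_g.
have [x [y gxy]] := connected_has_edge conn_g (ltnW T3).
have [F [bond_F _ pF]] := bond_bound x y gxy.
have := max_k F bond_F; lia.
Qed.
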